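(* The quadric $\mathcal E$ is an elliptic quadric of $\mathrm{PG}(W)\cong\mathrm{PG}(3,q)$.
   Context: $q$ is a prime power. Regard $\mathbb F_{q^6}$ as a $6$-dimensional $\mathbb F_q$-vector space. Let $F(X)=X^{q^2}-X^q+X$, an $\mathbb F_q$-linear map of $\mathbb F_{q^6}$, and $W=F(\mathbb F_{q^6})=\{z\in\mathbb F_{q^6} : z+z^q=z^{q^3}+z^{q^4}\}$, a $4$-dimensional $\mathbb F_q$-subspace, so $\mathrm{PG}(W)\cong\mathrm{PG}(3,q)$ with points $\langle z\rangle=\mathbb F_q^*z$. Let $\Phi(z)=z^{q^2}z+z^{q^2}z^{q}+z^{q}z^{q^3}$; for $z\in W$ one has $\Phi(z)\in\mathbb F_q$ and $\Phi$ is a quadratic form on $W$; $\mathcal E=\{\langle z\rangle\in\mathrm{PG}(W):\Phi(z)=0\}$. *)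

From HB Require Import structures.
From mathcomp Require Import all_boot all_order all_algebra all_field.
Set Implicit Arguments. Unset Strict Implicit. Unset Printing Implicit Defensive.
Import GRing.Theory.
Local Open Scope ring_scope.

(* Setting: L is a finite field with #|L| = q^6, i.e. L = F_{q^6}.
   The subfield F_q is { c | c^q = c }; L is an F_q-vector space with
   scalar multiplication given by the field multiplication. *)

Section Defs.
Variables (L : finFieldType) (q : nat).

Definition inFq (c : L) : Prop := c ^+ q = c.

Definition Fmap (x : L) : L := x ^+ (q ^ 2) - x ^+ q + x.

Definition inW (z : L) : Prop := exists x : L, z = Fmap x.

Definition Phi (z : L) : L :=
  z ^+ (q ^ 2) * z + z ^+ (q ^ 2) * z ^+ q + z ^+ q * z ^+ (q ^ 3).

Definition polar (Q : L -> L) (x y : L) : L := Q (x + y) - Q x - Q y.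

Definition Fq_dep (u v : L) : Prop :=
  exists c d : L, [/\ inFq c, inFq d, c != 0 \/ d != 0 & c * u + d * v = 0].

Definition is_quadratic_form_on_W (Q : L -> L) : Prop :=
  [/\ (forall z, inW z -> inFq (Q z)),
      (forall c z, inFq c -> inW z -> Q (c * z) = c ^+ 2 * Q z),
      (forall x y z, inW x -> inW y -> inW z ->
          polar Q (x + y) z = polar Q x z + polar Q y z)
    & (forall c x y, inFq c -> inW x -> inW y ->
          polar Q (c * x) y = c * polar Q x y)].

(* The quadric {<z> in PG(W) : Q z = 0} is an elliptic quadric of PG(W) = PG(3,q):
   Q is a nonsingular quadratic form on W of Witt index 1, i.e. the quadric
   has a point, Q has trivial singular radical, and the quadric contains no
   line (no totally singular 2-dimensional F_q-subspace of W). *)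
Definition elliptic_quadric_W (Q : L -> L) : Prop :=
  [/\ is_quadratic_form_on_W Q,
      (forall z, inW z -> Q z = 0 -> (forall w, inW w -> polar Q z w = 0) -> z = 0),
      (exists z, [/\ inW z, z != 0 & Q z = 0])
    &
      (forall u v, inW u -> inW v -> Q u = 0 -> Q v = 0 -> polar Q u v = 0 ->
          Fq_dep u v)].

End Defs.

From HB Require Import structures.
From mathcomp Require Import all_boot all_order all_algebra all_field ring.
Import GRing.Theory.
Local Open Scope ring_scope.
Set Implicit Arguments. Unset Strict Implicit.

(* Write s for the q-Frobenius x |-> x^q, so that s^6 = 1, F = s^2 - s + 1 and
   Phi z = s^2 z * z + s^2 z * s z + s z * s^3 z.  On W = F(L) the form Phi takes
   values in F_q, and it is nondegenerate: for fixed z, the polar form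
   B(z, F x) is a q-polynomial in x of degree at most q^5 < #|L| whose linear
   coefficient is s^2 z, so it vanishes on all of L only when z = 0.
   A singular point: if d <> 0 lies in F_{q^3} and has trace d + s d + s^2 d = 0
   over F_q, then 1/d = F(a + s a) for any a with a + s^3 a = 1/d, and
   Phi (1/d) = Tr(d) / N(d) = 0.
   No singular line: for the Moore determinant D = u s v - s u v one has
     - s D * D = (s v)^2 Phi u + (s u)^2 Phi v - s u * s v * B(u, v),
   so a totally singular pair u, v has D = 0, i.e. s (v / u) = v / u. *)

Section Frobenius.
Variables (L : finFieldType) (q : nat).
Hypothesis q_pchar_nat : [pchar L].-nat q.

Definition frob (n : nat) (x : L) : L := x ^+ (q ^ n).
Arguments frob : simpl never.

Fact frob_is_zmod_morphism n : zmod_morphism (frob n).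
Proof.
have qn_pchar_nat : [pchar L].-nat (q ^ n)%N by rewrite pnatX q_pchar_nat.
by move=> x y; rewrite /frob exprDn_pchar // exprNn_pchar.
Qed.

Fact frob_is_monoid_morphism n : monoid_morphism (frob n).
Proof. by split=> [|x y]; rewrite /frob ?expr1n ?exprMn. Qed.

HB.instance Definition _ n :=
  GRing.isZmodMorphism.Build L L (frob n) (frob_is_zmod_morphism n).
HB.instance Definition _ n :=
  GRing.isMonoidMorphism.Build L L (frob n) (frob_is_monoid_morphism n).

Lemma frob0 x : frob 0 x = x.
Proof. by rewrite /frob expr1. Qed.

Lemma frob1 x : frob 1 x = x ^+ q.
Proof. by rewrite /frob expn1. Qed.

Lemma frob_comp m n x : frob m (frob n x) = frob (n + m) x.
Proof. by rewrite /frob -exprM -expnD. Qed.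

Lemma frob_Fq n (c : L) : inFq q c -> frob n c = c.
Proof.
rewrite /inFq -frob1 => c_Fq; elim: n => [|n IHn]; first exact: frob0.
by rewrite -addn1 -frob_comp IHn.
Qed.

Section FiniteField.
Variable m : nat.
Hypothesis card_L : #|L| = (q ^ m)%N.

Lemma q_gt1 : (1 < q)%N.
Proof.
have : (1 < q ^ m)%N.
  by rewrite -card_L; apply/card_gt1P; exists 0, 1; rewrite eq_sym oner_neq0.
by case: q => [|[|//]]; rewrite ?exp1n //; case: m => // k; rewrite exp0n.
Qed.

Lemma frob_period n x : frob (m + n) x = frob n x.
Proof. by rewrite -frob_comp {2}/frob -card_L expf_card. Qed.

(* Linear independence of the powers of the Frobenius: the q-polynomial
   \sum_i c i X^(q^i) is nonzero of degree < q^m = #|L|, so it has a non-root. *)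
Lemma frob_combination_neq0 (c : nat -> L) j : (j < m)%N -> c j != 0 ->
  exists x, \sum_(i < m) c i * frob i x != 0.
Proof.
move=> j_lt_m cj_neq0.
pose P : {poly L} := \sum_(i < m) c i *: 'X^(q ^ i).
have P_neq0 : P != 0.
  apply: contraNneq cj_neq0 => P0.
  have <- : P`_(q ^ j) = c j.
    rewrite coef_sumMXn (big_pred1 (Ordinal j_lt_m)) // => i.
    by rewrite eqn_exp2l ?q_gt1.
  by rewrite P0 coef0.
have size_P : (size P <= #|L|)%N.
  rewrite card_L; apply: leq_trans (size_sum _ _ _) _; apply/bigmax_leqP => i _.
  apply: leq_trans (size_scale_leq _ _) _.
  by rewrite size_polyXn ltn_exp2l ?q_gt1.
have [x Px] : exists x, ~~ root P x.
  apply/existsP; apply: contraNT P_neq0 => /existsPn P_roots; apply/eqP.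
  apply: (roots_geq_poly_eq0 (rs := enum L)); last by rewrite -cardE.
    by apply/allP => x _; apply/negPn/P_roots.
  exact: enum_uniq.
exists x; move: Px; rewrite /root horner_sum.
by under eq_bigr do rewrite hornerZ hornerXn.
Qed.

End FiniteField.

Section Quadric.
Hypothesis card_L : #|L| = (q ^ 6)%N.

Local Ltac frob_simpl :=
  rewrite ?(rmorphD, rmorphB, rmorphN, rmorphM, fmorphV) /= ?frob_comp ?addnE /=
          ?(frob_period card_L) ?frob0.

Lemma Fmap_frob x : Fmap q x = frob 2 x - frob 1 x + x.
Proof. by rewrite /Fmap frob1. Qed.

Lemma Phi_frob z : Phi q z = frob 2 z * z + frob 2 z * frob 1 z + frob 1 z * frob 3 z.
Proof. by rewrite /Phi frob1. Qed.

Lemma Phi_Fmap_Fq (x : L) : inFq q (Phi q (Fmap q x)).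
Proof. rewrite /inFq -frob1 !Phi_frob Fmap_frob; frob_simpl; ring. Qed.

Lemma Phi_quadratic_form : is_quadratic_form_on_W q (@Phi L q).
Proof.
split=> [z [x ->]|c z c_Fq _|x y z _ _ _|c x y c_Fq _ _]; first exact: Phi_Fmap_Fq;
  rewrite /polar !Phi_frob; frob_simpl; rewrite ?(frob_Fq _ c_Fq); ring.
Qed.

Definition polar_Phi_coef (z : L) : seq L :=
  [:: frob 2 z; frob 3 z; z + frob 1 z - frob 3 z; frob 2 z + frob 3 z - z; z; frob 1 z].

Lemma polar_Phi_Fmap (z x : L) :
  polar (@Phi L q) z (Fmap q x) = \sum_(i < 6) (polar_Phi_coef z)`_i * frob i x.
Proof.
rewrite !big_ord_recr big_ord0 /= /polar !Phi_frob Fmap_frob.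
frob_simpl; ring.
Qed.

Lemma polar_Phi_nondegenerate (z : L) :
  (forall w, inW q w -> polar (@Phi L q) z w = 0) -> z = 0.
Proof.
move=> z_rad; apply/eqP/contraT => z_neq0.
have [|x] := frob_combination_neq0 card_L (c := nth 0 (polar_Phi_coef z)) (j := 0) isT.
  by rewrite /= fmorph_eq0.
by rewrite -polar_Phi_Fmap z_rad ?eqxx //; exists x.
Qed.

Lemma Fmap_add_frob (a : L) : Fmap q (a + frob 1 a) = a + frob 3 a.
Proof. rewrite Fmap_frob; frob_simpl; ring. Qed.

Lemma exists_trace_one_over_Fq3 : exists t : L, t + frob 3 t = 1.
Proof.
have [s] := frob_combination_neq0 card_L (c := nth 0 [:: 1; 0; 0; 1]) (j := 0) isT
  (oner_neq0 _).
rewrite !big_ord_recr big_ord0 /= !mul0r !mul1r !addr0 add0r frob0 => s_neq0.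
by exists (s / (s + frob 3 s)); frob_simpl; rewrite [frob 3 s + s]addrC -mulrDl divff.
Qed.

(* d = u - s u with u = y + s^3 y in F_{q^3}, so its trace u - s^3 u telescopes to 0. *)
Lemma exists_Fq3_trace_zero :
  exists d : L, [/\ d != 0, frob 3 d = d & d + frob 1 d + frob 2 d = 0].
Proof.
have [y] := frob_combination_neq0 card_L (c := nth 0 [:: 1; -1; 0; 1; -1]) (j := 0) isT
  (oner_neq0 _).
rewrite !big_ord_recr big_ord0 /= !mul0r !mul1r !mulN1r !addr0 add0r frob0 => d_neq0.
by exists (y - frob 1 y + frob 3 y - frob 4 y); split=> //; frob_simpl; ring.
Qed.

Lemma Phi_inv_Fq3_trace_zero (d : L) :
  d != 0 -> frob 3 d = d -> d + frob 1 d + frob 2 d = 0 -> Phi q d^-1 = 0.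
Proof.
move=> d_neq0 d_Fq3 d_trace.
have d1_neq0 : frob 1 d != 0 by rewrite fmorph_eq0.
have d2_neq0 : frob 2 d != 0 by rewrite fmorph_eq0.
suff -> : Phi q d^-1 = (d + frob 1 d + frob 2 d) / (d * frob 1 d * frob 2 d).
  by rewrite d_trace mul0r.
rewrite Phi_frob; frob_simpl; rewrite d_Fq3.
by field; rewrite d_neq0 d1_neq0 d2_neq0.
Qed.

Lemma Phi_isotropic_point : exists z : L, [/\ inW q z, z != 0 & Phi q z = 0].
Proof.
have [t t_trace] := exists_trace_one_over_Fq3.
have [d [d_neq0 d_Fq3 d_trace]] := exists_Fq3_trace_zero.
exists d^-1; split; last exact: Phi_inv_Fq3_trace_zero.
- exists (d^-1 * t + frob 1 (d^-1 * t)); rewrite Fmap_add_frob.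
  by frob_simpl; rewrite d_Fq3 -mulrDr t_trace mulr1.
- by rewrite invr_eq0.
Qed.

Lemma Phi_moore_identity (u v : L) :
  let D := u * frob 1 v - frob 1 u * v in
  - (frob 1 D * D) = frob 1 v ^+ 2 * Phi q u + frob 1 u ^+ 2 * Phi q v
                     - frob 1 u * frob 1 v * polar (@Phi L q) u v.
Proof. rewrite /= /polar !Phi_frob; frob_simpl; ring. Qed.

Lemma Phi_singular_line_dep (u v : L) :
  Phi q u = 0 -> Phi q v = 0 -> polar (@Phi L q) u v = 0 -> Fq_dep q u v.
Proof.
move=> Pu Pv Puv; have := Phi_moore_identity u v.
rewrite Pu Pv Puv !mulr0 subr0 addr0 => /eqP.
rewrite oppr_eq0 mulf_eq0 fmorph_eq0 orbb subr_eq0 => /eqP moore.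
have [->|u_neq0] := eqVneq u 0.
  exists 1, 0; split.
  - by rewrite /inFq expr1n.
  - by rewrite /inFq -frob1 rmorph0.
  - by left; exact: oner_neq0.
  - by rewrite mulr0 mul0r addr0.
exists (- (v / u)), 1; split.
- rewrite /inFq -frob1 rmorphN fmorph_div; congr (- _); apply/eqP.
  by rewrite eqr_div ?fmorph_eq0 // mulrC moore mulrC.
- by rewrite /inFq expr1n.
- by right; exact: oner_neq0.
- by rewrite mul1r mulNr divfK ?addNr.
Qed.

End Quadric.
End Frobenius.

Theorem mainTheorem16 (L : finFieldType) (q : nat)
  (hq : exists p k : nat, [/\ prime p, (0 < k)%N & q = (p ^ k)%N])
  (hL : #|L| = (q ^ 6)%N) :
  @elliptic_quadric_W L q (@Phi L q).
Proof.
have [p [k [p_pr _ q_def]]] := hq.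
have p_char : p \in [pchar L] by apply: (card_finPcharP _ p_pr); rewrite hL q_def -expnM.
have q_pchar_nat : [pchar L].-nat q.
  by rewrite q_def pnatX (eq_pnat _ (pcharf_eq p_char)) pnat_id.
split.
- exact: Phi_quadratic_form.
- by move=> z _ _; apply: polar_Phi_nondegenerate.
- exact: Phi_isotropic_point.
- by move=> u v _ _; apply: Phi_singular_line_dep.
Qed.
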